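(* Let $f(x)=\frac1n\sum_{i=1}^n f_i(x)$ on $\mathbb{R}^d$, where each $f_i$ is differentiable, lower bounded and $L_i$-smooth, $L_{\max}=\max_iL_i$, and assume $f$ is $\mu$-PL ($\mu>0$). Fix $\lambda\in[0,1]$ and consider deterministic Unified SAM $$x^{t+1}=x^t-\gamma\,\nabla f\!\left(x^t+\rho\left(1-\lambda+\frac{\lambda}{\|\nabla f(x^t)\|}\right)\nabla f(x^t)\right)$$ with $\rho\le\frac{1}{L_{\max}(1+2(1-\lambda)^2)}$ and $\gamma\le\frac{1-L_{\max}\rho(1+2(1-\lambda)^2)}{2L_{\max}[2L_{\max}^2\rho^2(1-\lambda)^2+1]}$. Then for all $t\ge0$ $$f(x^t)-f(x^* )\le(1-\gamma\mu)^t[f(x^0)-f(x^* )]+\frac{L_{\max}\rho(1+2\gamma L_{\max}^2\rho)\lambda^2}{\mu}.$$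
   Context: Each $f_i$ is $L_i$-smooth: $\|\nabla f_i(x)-\nabla f_i(y)\|\le L_i\|x-y\|$. The set of minimizers of $f$ is nonempty and $x^*$ is a minimizer. $f$ is $\mu$-PL if $\|\nabla f(x)\|^2\ge 2\mu(f(x)-f(x^* ))$ for all $x$. The deterministic method is the full-batch case of Unified SAM, i.e. the stochastic gradient is the exact gradient $\nabla f$. *)

From HB Require Import structures.
From mathcomp Require Import all_boot all_order all_algebra.
From mathcomp Require Import all_classical all_reals.
From mathcomp Require Import topology normedtype derive.
Set Implicit Arguments. Unset Strict Implicit. Unset Printing Implicit Defensive.
Import Order.TTheory GRing.Theory Num.Theory.
Import numFieldNormedType.Exports.
Local Open Scope ring_scope.

Definition dotv (R : realType) (d : nat) (u v : 'rV[R]_d) : R :=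
  \sum_(i < d) u 0 i * v 0 i.

Definition enorm (R : realType) (d : nat) (u : 'rV[R]_d) : R :=
  Num.sqrt (dotv u u).

Definition is_gradient (R : realType) (d : nat)
  (h : 'rV[R]_d -> R) (g : 'rV[R]_d -> 'rV[R]_d) : Prop :=
  forall x, differentiable h x /\ forall v, ('d h x : 'rV[R]_d -> R) v = dotv (g x) v.

Definition smooth_grad (R : realType) (d : nat) (g : 'rV[R]_d -> 'rV[R]_d) (L : R) : Prop :=
  forall x y, enorm (g x - g y) <= L * enorm (x - y).

Definition lower_bounded (R : realType) (d : nat) (h : 'rV[R]_d -> R) : Prop :=
  exists b : R, forall x, b <= h x.

Definition PL (R : realType) (d : nat) (h : 'rV[R]_d -> R) (g : 'rV[R]_d -> 'rV[R]_d)
  (mu : R) (xstar : 'rV[R]_d) : Prop :=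
  forall x, enorm (g x) ^+ 2 >= 2 * mu * (h x - h xstar).

(* One step of deterministic Unified SAM (convention 0^-1 = 0: when the
   gradient vanishes, the perturbation is 0 anyway). *)
Definition usam_step (R : realType) (d : nat) (g : 'rV[R]_d -> 'rV[R]_d)
  (gamma rho lambda : R) (x : 'rV[R]_d) : 'rV[R]_d :=
  x - gamma *: g (x + (rho * (1 - lambda + lambda / enorm (g x))) *: g x).

From HB Require Import structures.
From mathcomp Require Import all_boot all_order all_algebra.
From mathcomp Require Import all_classical all_reals.
From mathcomp Require Import topology normedtype derive.
From mathcomp Require Import ring lra.
Import Order.TTheory GRing.Theory Num.Theory.
Import numFieldNormedType.Exports.
Local Open Scope ring_scope.

(* By smoothness, f (x - gamma h) <= f x - gamma <g x, h> + L gamma^2 / 2 |h|^2.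
   The USAM direction h is the gradient at a point at distance
   rho ((1 - lambda) |g x| + lambda) from x, so |h - g x| is at most L times
   that; under the step-size condition one step therefore decreases f by
   gamma |g x|^2 / 2 up to an error gamma L rho (1 + 2 gamma L^2 rho) lambda^2.
   PL turns gamma |g x|^2 / 2 into gamma mu (f x - f xstar), and unrolling the
   resulting affine recursion gives the bound.  The average f is Lmax-smooth,
   and if mu > Lmax then PL and smoothness force f to be constant. *)

Section InnerProduct.
Context {R : realType} {d : nat}.
Implicit Types u v w : 'rV[R]_d.

Lemma dotvC u v : dotv u v = dotv v u.
Proof. by apply: eq_bigr => i _; rewrite mulrC. Qed.

Lemma dotvDl u v w : dotv (u + v) w = dotv u w + dotv v w.
Proof. by rewrite /dotv -big_split; apply: eq_bigr => i _; rewrite !mxE mulrDl. Qed.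

Lemma dotvNl u w : dotv (- u) w = - dotv u w.
Proof. by rewrite /dotv -sumrN; apply: eq_bigr => i _; rewrite !mxE mulNr. Qed.

Lemma dotvBl u v w : dotv (u - v) w = dotv u w - dotv v w.
Proof. by rewrite dotvDl dotvNl. Qed.

Lemma dotvZl a u w : dotv (a *: u) w = a * dotv u w.
Proof. by rewrite /dotv mulr_sumr; apply: eq_bigr => i _; rewrite !mxE mulrA. Qed.

Lemma dotvDr u v w : dotv w (u + v) = dotv w u + dotv w v.
Proof. by rewrite !(dotvC w) dotvDl. Qed.

Lemma dotvNr u w : dotv w (- u) = - dotv w u.
Proof. by rewrite !(dotvC w) dotvNl. Qed.

Lemma dotvBr u v w : dotv w (u - v) = dotv w u - dotv w v.
Proof. by rewrite !(dotvC w) dotvBl. Qed.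

Lemma dotvZr a u w : dotv w (a *: u) = a * dotv w u.
Proof. by rewrite !(dotvC w) dotvZl. Qed.

Lemma dotvv_ge0 u : 0 <= dotv u u.
Proof. by apply: sumr_ge0 => i _; rewrite -expr2 sqr_ge0. Qed.

Lemma dotvv_eq0_dotv u : dotv u u = 0 -> forall v, dotv u v = 0.
Proof.
move=> /eqP; rewrite psumr_eq0 => [/allP u0 v|i _]; last by rewrite -expr2 sqr_ge0.
apply: big1 => i _; move/implyP: (u0 i (mem_index_enum _)).
by rewrite mulf_eq0 orbb => /(_ isT) /eqP ->; rewrite mul0r.
Qed.

Lemma enorm_ge0 u : 0 <= enorm u.
Proof. exact: sqrtr_ge0. Qed.

Lemma enorm_sqr u : enorm u ^+ 2 = dotv u u.
Proof. by rewrite sqr_sqrtr // dotvv_ge0. Qed.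

Lemma enormN u : enorm (- u) = enorm u.
Proof. by rewrite /enorm dotvNl dotvNr opprK. Qed.

Lemma enormZ a u : enorm (a *: u) = `|a| * enorm u.
Proof.
by rewrite /enorm dotvZl dotvZr mulrA -expr2 sqrtrM ?sqr_ge0 // sqrtr_sqr.
Qed.

Lemma enorm_eq0_dotv u : enorm u = 0 -> forall v, dotv u v = 0.
Proof. by move=> u0; apply: dotvv_eq0_dotv; rewrite -enorm_sqr u0 expr0n. Qed.

Lemma dotv_le_enorm u v : dotv u v <= enorm u * enorm v.
Proof.
have [/enorm_eq0_dotv -> | u_neq0] := eqVneq (enorm u) 0; first by rewrite mulr_ge0 ?enorm_ge0.
have [/enorm_eq0_dotv v0 | v_neq0] := eqVneq (enorm v) 0.
  by rewrite dotvC v0 mulr_ge0 ?enorm_ge0.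
set A := enorm u in u_neq0 *; set B := enorm v in v_neq0 *.
have A_gt0 : 0 < A by rewrite lt_neqAle eq_sym u_neq0 enorm_ge0.
have B_gt0 : 0 < B by rewrite lt_neqAle eq_sym v_neq0 enorm_ge0.
have := dotvv_ge0 (B *: u - A *: v).
rewrite !(dotvBl, dotvBr, dotvZl, dotvZr) (dotvC v u) -!enorm_sqr -/A -/B => sq_ge0.
have : 2 * A * B * dotv u v <= 2 * A * B * (A * B) by nra.
by rewrite ler_pM2l // !mulr_gt0.
Qed.

Lemma enorm_le_dotv u v : - (enorm u * enorm v) <= dotv u v.
Proof. by rewrite lerNl -dotvNl -(enormN u) dotv_le_enorm. Qed.

End InnerProduct.

Section Smoothness.
Context {R : realType} {d : nat}.
Implicit Types (h : 'rV[R]_d -> R) (g : 'rV[R]_d -> 'rV[R]_d) (x v : 'rV[R]_d).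

Lemma is_derive_line h g x v (s : R) : is_gradient h g ->
  is_derive s 1 (fun t : R => h (t *: v + x)) (dotv (g (s *: v + x)) v).
Proof.
move=> hg; have [dh dhv] := hg (s *: v + x).
have quotientE : (fun t : R => t^-1 *: (h ((t *: 1 + s) *: v + x) - h (s *: v + x)))
    = (fun t : R => t^-1 *: (h (t *: v + (s *: v + x)) - h (s *: v + x))).
  by apply: funext => t; rewrite [_%:A]mulr1 scalerDl addrA.
have hv : derivable h (s *: v + x) v by exact: diff_derivable.
apply: DeriveDef; first by rewrite /derivable quotientE.
by rewrite /derive quotientE -/(derive h (s *: v + x) v) deriveE // dhv.
Qed.

(* [phi t = h (x + t v) - t <g x, v> - t^2 K] is nonincreasing on [0, 1], since
   its derivative [<g (x + t v) - g x, v> - 2 t K] is nonpositive by smoothness. *)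
Lemma smooth_descent {h g} {L : R} x y : is_gradient h g -> smooth_grad g L -> 0 <= L ->
  h y <= h x + dotv (g x) (y - x) + L / 2 * enorm (y - x) ^+ 2.
Proof.
move=> hg gL L_ge0.
set v := y - x; set c := dotv (g x) v; set K := L / 2 * dotv v v.
pose phi := (fun t : R => h (t *: v + x)) - (c \*: (@id R) + K \*: ((@id R) * (@id R))).
have phi_derive : forall t : R, is_derive t (1 : R) phi
    (dotv (g (t *: v + x)) v - (c%:A + K *: (t%:A + t%:A))).
  by move=> t; apply: is_deriveB; apply: is_derive_line.
have phi_derivable (t : R) : derivable phi t 1 by have [] := phi_derive t.
have phi'_le0 : forall t : R, t \in `]0, 1[ -> derive1 phi t <= 0.
  move=> t; rewrite in_itv /= => /andP [t_gt0 _].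
  rewrite derive1E (@derive_val _ _ _ _ _ _ _ (phi_derive t)) /c /K ![_%:A]mulr1.
  have := dotv_le_enorm (g (t *: v + x) - g x) v; rewrite dotvBl.
  have := gL (t *: v + x) x; rewrite addrK enormZ (ger0_norm (ltW t_gt0)).
  have := enorm_ge0 v; rewrite -enorm_sqr => v_ge0 /(ler_wpM2r v_ge0) smooth_v cs.
  have -> : (L / 2 * enorm v ^+ 2) *: (t + t) = L / 2 * enorm v ^+ 2 * (t + t) by [].
  nra.
have phi_cont := derivable_within_continuous (i := `[0, 1]%R) (fun t _ => phi_derivable t).
have := ler0_derive1_le_cc (fun t _ => phi_derivable t) phi'_le0 phi_cont.
move=> /(_ 1 0); rewrite !in_itv /= !lexx ler01 => /(_ isT isT isT).
change (h (1 *: v + x) - (c * 1 + K * (1 * 1)) <= h (0 *: v + x) - (c * 0 + K * (0 * 0))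
  -> h y <= h x + c + L / 2 * enorm v ^+ 2).
by rewrite scale1r scale0r add0r /v subrK enorm_sqr -/v /K; lra.
Qed.

End Smoothness.

Section Average.
Context {R : realType} {d n : nat}.
Context {fi : 'I_n -> 'rV[R]_d -> R} {gi : 'I_n -> 'rV[R]_d -> 'rV[R]_d}.
Hypothesis fi_grad : forall i, is_gradient (fi i) (gi i).

Lemma dotv_grad_avg gf :
  is_gradient (fun y => n%:R^-1 * \sum_(i < n) fi i y) gf ->
  forall x v, dotv (gf x) v = n%:R^-1 * \sum_(i < n) dotv (gi i x) v.
Proof.
move=> f_grad x v; have [df dfv] := f_grad x.
rewrite -dfv -deriveE //.
have -> : (fun y => n%:R^-1 * \sum_(i < n) fi i y) = n%:R^-1 \*: \sum_(i < n) fi i.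
  by apply: funext => y /=; rewrite fct_sumE.
have fi_derivable : forall i, derivable (fi i) x v.
  by move=> i; apply: diff_derivable; have [] := fi_grad i x.
rewrite deriveZ; last exact: derivable_sum.
rewrite derive_sum //; congr (_ * _); apply: eq_bigr => i _.
by have [dfi dfiv] := fi_grad i x; rewrite deriveE // dfiv.
Qed.

Lemma smooth_grad_avg gf (L : 'I_n -> R) Lm : (0 < n)%N ->
  is_gradient (fun y => n%:R^-1 * \sum_(i < n) fi i y) gf ->
  (forall i, smooth_grad (gi i) (L i)) -> (forall i, L i <= Lm) -> 0 <= Lm ->
  smooth_grad gf Lm.
Proof.
move=> n_gt0 f_grad gi_smooth L_le Lm_ge0 x y.
set w := gf x - gf y.
have w_ge0 := enorm_ge0 w; have xy_ge0 := enorm_ge0 (x - y).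
suff : enorm w ^+ 2 <= Lm * enorm (x - y) * enorm w.
  have [-> _ | w_neq0] := eqVneq (enorm w) 0; first by rewrite mulr_ge0.
  by rewrite expr2 ler_pM2r // lt_neqAle eq_sym w_neq0.
rewrite enorm_sqr {1}/w dotvBl !(dotv_grad_avg _ f_grad) -mulrBr -sumrB.
have -> : Lm * enorm (x - y) * enorm w
    = n%:R^-1 * \sum_(i < n) (Lm * enorm (x - y) * enorm w).
  by rewrite sumr_const card_ord -[(_ * _ * _) *+ n]mulr_natl mulKf // pnatr_eq0 -lt0n.
rewrite ler_wpM2l ?invr_ge0 ?ler0n //; apply: ler_sum => i _.
rewrite -dotvBl (le_trans (dotv_le_enorm _ _)) // ler_wpM2r //.
by rewrite (le_trans (gi_smooth i x y)) // ler_wpM2r.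
Qed.

End Average.

Lemma usam_descent_ineq {R : realFieldType} {L rho lambda gamma G s : R} :
  0 <= L -> 0 <= rho -> 0 <= lambda <= 1 -> 0 < gamma ->
  gamma * (2 * L * (2 * L ^+ 2 * rho ^+ 2 * (1 - lambda) ^+ 2 + 1))
    <= 1 - L * rho * (1 + 2 * (1 - lambda) ^+ 2) ->
  0 <= G -> 0 <= s -> s <= L * rho * (1 - lambda) * G + L * rho * lambda ->
  - gamma * G ^+ 2 + gamma * (G * s) + L * gamma ^+ 2 * (G ^+ 2 + s ^+ 2)
    <= - (gamma / 2) * G ^+ 2
       + gamma * (L * rho * (1 + 2 * gamma * L ^+ 2 * rho) * lambda ^+ 2).
Proof.
move=> L_ge0 rho_ge0 /andP[lambda_ge0 lambda_le1] gamma_gt0 gamma_le G_ge0 s_ge0 s_le.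
set u := 1 - lambda; set a := L * rho * u; set b := L * rho * lambda.
have u_ge0 : 0 <= u by rewrite subr_ge0.
have Lrho_ge0 : 0 <= L * rho by rewrite mulr_ge0.
have a_ge0 : 0 <= a by rewrite mulr_ge0.
have b_ge0 : 0 <= b by rewrite mulr_ge0.
have Gs_le : G * s <= a * G ^+ 2 + b * G.
  by have := ler_wpM2l G_ge0 s_le; rewrite -/a -/b; lra.
(* AM-GM: [b G = L rho lambda G <= L rho (lambda^2 + G^2 / 4)] *)
have bG_le : b * G <= L * rho * lambda ^+ 2 + L * rho / 4 * G ^+ 2.
  by have := ler_wpM2l Lrho_ge0 (sqr_ge0 (lambda - G / 2)); rewrite /b; lra.
have s2_le : s ^+ 2 <= 2 * a ^+ 2 * G ^+ 2 + 2 * b ^+ 2.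
  have : s ^+ 2 <= (a * G + b) ^+ 2.
    by rewrite ler_sqr ?nnegrE ?addr_ge0 ?mulr_ge0 // -/a -/b; lra.
  by have := sqr_ge0 (a * G - b); lra.
have coef_le : - 1 + a + L * rho / 4 + L * gamma * (1 + 2 * a ^+ 2) <= - (1 / 2).
  have := ler_wpM2l Lrho_ge0 (sqr_ge0 (u - 1 / 2)).
  by move: gamma_le; rewrite /a -/u; nra.
have gammaG2_ge0 : 0 <= gamma * G ^+ 2 by rewrite mulr_ge0 ?sqr_ge0 // ltW.
have Lgamma2_ge0 : 0 <= L * gamma ^+ 2 by rewrite mulr_ge0 ?sqr_ge0.
have := ler_wpM2l (ltW gamma_gt0) (le_trans Gs_le (lerD (lexx _) bG_le)).
have := ler_wpM2l Lgamma2_ge0 s2_le.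
have := ler_wpM2l gammaG2_ge0 coef_le.
have -> : b ^+ 2 = L ^+ 2 * rho ^+ 2 * lambda ^+ 2 by rewrite /b; ring.
lra.
Qed.

Lemma affine_recursion_le {R : realFieldType} (e : nat -> R) (q c : R) :
  0 <= q -> q < 1 -> 0 <= c -> (forall t, e t.+1 <= q * e t + c) ->
  forall t, e t <= q ^+ t * e 0%N + c / (1 - q).
Proof.
move=> q_ge0 q_lt1 c_ge0 e_step; elim=> [|t IH].
  by rewrite expr0 mul1r lerDl divr_ge0 // subr_ge0 ltW.
have fixE : c / (1 - q) = q * (c / (1 - q)) + c.
  by field; rewrite gt_eqF // subr_gt0.
rewrite (le_trans (e_step t)) // fixE exprS -mulrA addrA -mulrDr lerD2r.
by rewrite ler_wpM2l.
Qed.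

Section UnifiedSAM.
Context {R : realType} {d : nat} {f : 'rV[R]_d -> R} {g : 'rV[R]_d -> 'rV[R]_d} {L : R}.
Hypotheses (f_grad : is_gradient f g) (g_smooth : smooth_grad g L) (L_ge0 : 0 <= L).
Implicit Types (x y h xstar : 'rV[R]_d) (mu rho lambda gamma : R).

Lemma inexact_gradient_step x h gamma : 0 <= gamma ->
  f (x - gamma *: h) <= f x - gamma * enorm (g x) ^+ 2
    + gamma * (enorm (g x) * enorm (h - g x))
    + L * gamma ^+ 2 * (enorm (g x) ^+ 2 + enorm (h - g x) ^+ 2).
Proof.
move=> gamma_ge0; set G := enorm (g x); set e := h - g x; set s := enorm e.
have dot_h : dotv (g x) h = G ^+ 2 + dotv (g x) e.
  by rewrite /e /G dotvBr enorm_sqr; ring.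
have sqr_h : enorm h ^+ 2 = G ^+ 2 + 2 * dotv (g x) e + s ^+ 2.
  by rewrite /s /e /G !enorm_sqr !(dotvBl, dotvBr) (dotvC h (g x)); ring.
have := smooth_descent x (x - gamma *: h) f_grad g_smooth L_ge0.
rewrite [x - _ - x]addrAC subrr add0r dotvNr dotvZr enormN enormZ (ger0_norm gamma_ge0).
rewrite exprMn dot_h sqr_h.
have := ler_wpM2l gamma_ge0 (enorm_le_dotv (g x) e).
have := ler_wpM2l (mulr_ge0 L_ge0 (sqr_ge0 gamma)) (dotv_le_enorm (g x) e).
have := ler_wpM2l (mulr_ge0 L_ge0 (sqr_ge0 gamma)) (sqr_ge0 (G - s)).
rewrite -/G -/s; nra.
Qed.

Lemma usam_perturbation_le x rho lambda : 0 <= rho -> 0 <= lambda <= 1 ->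
  enorm (g (x + (rho * (1 - lambda + lambda / enorm (g x))) *: g x) - g x)
    <= L * rho * (1 - lambda) * enorm (g x) + L * rho * lambda.
Proof.
move=> rho_ge0 /andP[lambda_ge0 lambda_le1].
set G := enorm (g x); set alpha := rho * _.
have alpha_ge0 : 0 <= alpha.
  by rewrite mulr_ge0 // addr_ge0 ?subr_ge0 // mulr_ge0 ?invr_ge0 ?enorm_ge0.
have alphaG_le : alpha * G <= rho * (1 - lambda) * G + rho * lambda.
  have [-> | G_neq0] := eqVneq G 0; first by rewrite !mulr0 add0r mulr_ge0.
  by rewrite /alpha -mulrA mulrDl mulfVK // mulrDr mulrA.
apply: (le_trans (g_smooth _ _)).
rewrite [x + _ - x]addrAC subrr add0r enormZ (ger0_norm alpha_ge0) -/G.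
by rewrite (le_trans (ler_wpM2l L_ge0 alphaG_le)) // mulrDr !mulrA.
Qed.

Lemma usam_step_gap mu rho lambda gamma xstar x :
  PL f g mu xstar -> 0 <= rho -> 0 <= lambda <= 1 -> 0 < gamma ->
  gamma * (2 * L * (2 * L ^+ 2 * rho ^+ 2 * (1 - lambda) ^+ 2 + 1))
    <= 1 - L * rho * (1 + 2 * (1 - lambda) ^+ 2) ->
  f (usam_step g gamma rho lambda x) - f xstar
    <= (1 - gamma * mu) * (f x - f xstar)
       + gamma * (L * rho * (1 + 2 * gamma * L ^+ 2 * rho) * lambda ^+ 2).
Proof.
move=> f_PL rho_ge0 lambda01 gamma_gt0 gamma_le.
have := inexact_gradient_step x
  (g (x + (rho * (1 - lambda + lambda / enorm (g x))) *: g x)) gamma (ltW gamma_gt0).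
have := usam_descent_ineq L_ge0 rho_ge0 lambda01 gamma_gt0 gamma_le
  (enorm_ge0 _) (enorm_ge0 _) (usam_perturbation_le x _ _ rho_ge0 lambda01).
have := ler_wpM2l (divr_ge0 (ltW gamma_gt0) (ler0n _ 2)) (f_PL x).
rewrite /usam_step; lra.
Qed.

Lemma sqr_enorm_grad_le_gap xstar y : 0 < L -> (forall z, f xstar <= f z) ->
  enorm (g y) ^+ 2 <= 2 * L * (f y - f xstar).
Proof.
move=> L_gt0 f_min.
have := smooth_descent y (y - L^-1 *: g y) f_grad g_smooth L_ge0.
rewrite [y - _ - y]addrAC subrr add0r dotvNr dotvZr enormN enormZ ger0_norm ?invr_ge0 //.
rewrite -enorm_sqr; set G := enorm (g y).
have -> : L / 2 * (L^-1 * G) ^+ 2 = L^-1 * G ^+ 2 / 2 by field; rewrite gt_eqF.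
move=> descent; have := le_trans (f_min _) descent.
rewrite -subr_ge0 => gap_ge0.
have := mulr_ge0 (mulr_ge0 (ler0n R 2) (ltW L_gt0)) gap_ge0.
have -> : 2 * L * (f y - L^-1 * G ^+ 2 + L^-1 * G ^+ 2 / 2 - f xstar)
    = 2 * L * (f y - f xstar) - G ^+ 2 by field; rewrite gt_eqF.
by rewrite subr_ge0.
Qed.

(* PL and smoothness give [2 mu (f y - f xstar) <= |g y|^2 <= 2 L (f y - f xstar)]. *)
Lemma PL_gt_smooth_const mu xstar : 0 < L -> L < mu -> PL f g mu xstar ->
  (forall z, f xstar <= f z) -> forall y, f y = f xstar.
Proof.
move=> L_gt0 L_lt_mu f_PL f_min y.
have := sqr_enorm_grad_le_gap _ y L_gt0 f_min; have := f_PL y.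
have := f_min y; rewrite -subr_ge0; set gap := f y - f xstar => gap_ge0 PL_y smooth_y.
have : (mu - L) * gap <= 0 by lra.
rewrite pmulr_rle0 ?subr_gt0 // => gap_le0.
by apply/eqP; rewrite -subr_eq0 eq_le gap_le0 gap_ge0.
Qed.

Lemma usam_PL_rate mu rho lambda gamma xstar (x : nat -> 'rV[R]_d) :
  0 < L -> 0 < mu -> PL f g mu xstar -> (forall z, f xstar <= f z) ->
  0 <= rho -> 0 <= lambda <= 1 -> 0 < gamma ->
  gamma * (2 * L * (2 * L ^+ 2 * rho ^+ 2 * (1 - lambda) ^+ 2 + 1))
    <= 1 - L * rho * (1 + 2 * (1 - lambda) ^+ 2) ->
  (forall t, x t.+1 = usam_step g gamma rho lambda (x t)) ->
  forall t, f (x t) - f xstar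
    <= (1 - gamma * mu) ^+ t * (f (x 0%N) - f xstar)
       + L * rho * (1 + 2 * gamma * L ^+ 2 * rho) * lambda ^+ 2 / mu.
Proof.
move=> L_gt0 mu_gt0 f_PL f_min rho_ge0 lambda01 gamma_gt0 gamma_le x_step.
set C := L * rho * _ * _.
have C_ge0 : 0 <= C.
  have := mulr_ge0 (mulr_ge0 (mulr_ge0 (ler0n R 2) (ltW gamma_gt0)) (sqr_ge0 L)) rho_ge0.
  move/(addr_ge0 ler01)/(mulr_ge0 (mulr_ge0 L_ge0 rho_ge0)) => C_lambda_ge0.
  exact: mulr_ge0 C_lambda_ge0 (sqr_ge0 lambda).
have [mu_le | L_lt_mu] := lerP mu L; last first.
  move=> t; have f_const := PL_gt_smooth_const _ _ L_gt0 L_lt_mu f_PL f_min.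
  by rewrite (f_const (x t)) (f_const (x 0%N)) subrr mulr0 add0r divr_ge0 // ltW.
have q_ge0 : 0 <= 1 - gamma * mu.
  have := ler_wpM2l (ltW gamma_gt0) mu_le.
  have := mulr_ge0 (mulr_ge0 (ltW gamma_gt0) L_ge0) (sqr_ge0 (L * rho * (1 - lambda))).
  have := mulr_ge0 (mulr_ge0 L_ge0 rho_ge0) (sqr_ge0 (1 - lambda)).
  move: gamma_le; nra.
have q_lt1 : 1 - gamma * mu < 1 by rewrite ltrBlDr ltrDl mulr_gt0.
have := affine_recursion_le (fun t => f (x t) - f xstar) _ _ q_ge0 q_lt1
  (mulr_ge0 (ltW gamma_gt0) C_ge0).
have -> : gamma * C / (1 - (1 - gamma * mu)) = C / mu.
  by field; rewrite !gt_eqF // subr_gt0.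
by apply=> t; rewrite x_step; exact: usam_step_gap.
Qed.

End UnifiedSAM.

(* The hypothesis on [rho] is implied by the one on [gamma], whose right-hand
   side must be positive. *)
Theorem corollary3p4 (R : realType) (d n : nat)
  (fi : 'I_n -> 'rV[R]_d -> R) (gi : 'I_n -> 'rV[R]_d -> 'rV[R]_d) (L : 'I_n -> R)
  (f : 'rV[R]_d -> R) (gf : 'rV[R]_d -> 'rV[R]_d)
  (mu lambda rho gamma : R) (xstar : 'rV[R]_d) (x : nat -> 'rV[R]_d) :
  (0 < n)%N ->
  (forall i, is_gradient (fi i) (gi i)) ->
  (forall i, lower_bounded (fi i)) ->
  (forall i, 0 <= L i) ->
  (forall i, smooth_grad (gi i) (L i)) ->
  f = (fun y => n%:R^-1 * \sum_(i < n) fi i y) ->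
  is_gradient f gf ->
  (forall y, f xstar <= f y) ->
  0 < mu ->
  PL f gf mu xstar ->
  0 <= lambda <= 1 ->
  let Lmax := \big[Num.max/0]_(i < n) L i in
  0 <= rho ->
  rho <= (Lmax * (1 + 2 * (1 - lambda) ^+ 2))^-1 ->
  0 < gamma ->
  gamma <= (1 - Lmax * rho * (1 + 2 * (1 - lambda) ^+ 2))
           / (2 * Lmax * (2 * Lmax ^+ 2 * rho ^+ 2 * (1 - lambda) ^+ 2 + 1)) ->
  (forall t, x t.+1 = usam_step gf gamma rho lambda (x t)) ->
  forall t : nat,
    f (x t) - f xstar <=
      (1 - gamma * mu) ^+ t * (f (x 0%N) - f xstar)
      + Lmax * rho * (1 + 2 * gamma * Lmax ^+ 2 * rho) * lambda ^+ 2 / mu.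
Proof.
move=> n_gt0 fi_grad _ L_ge0 gi_smooth f_avg f_grad f_min mu_gt0 f_PL lambda01 Lmax
  rho_ge0 _ gamma_gt0 gamma_le x_step.
have L_le : forall i, L i <= Lmax by move=> i; exact: le_bigmax.
have Lmax_ge0 : 0 <= Lmax := le_trans (L_ge0 (Ordinal n_gt0)) (L_le _).
have Lmax_gt0 : 0 < Lmax.
  rewrite lt_neqAle Lmax_ge0 andbT; apply/eqP => Lmax0.
  by move: gamma_le; rewrite -Lmax0 mulr0 mul0r invr0 mulr0; lra.
have gf_smooth : smooth_grad gf Lmax.
  rewrite f_avg in f_grad.
  exact: smooth_grad_avg fi_grad _ _ _ n_gt0 f_grad gi_smooth L_le Lmax_ge0.
have den_gt0 : 0 < 2 * Lmax * (2 * Lmax ^+ 2 * rho ^+ 2 * (1 - lambda) ^+ 2 + 1).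
  rewrite !mulr_gt0 //; apply: (ltr_wpDl _ ltr01).
  exact: mulr_ge0 (mulr_ge0 (mulr_ge0 (ler0n _ 2) (sqr_ge0 _)) (sqr_ge0 _)) (sqr_ge0 _).
rewrite ler_pdivlMr // in gamma_le.
exact: usam_PL_rate f_grad gf_smooth Lmax_ge0 _ _ _ _ _ _ Lmax_gt0 mu_gt0 f_PL f_min
  rho_ge0 lambda01 gamma_gt0 gamma_le x_step.
Qed.
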